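(* Let $\beta>0$, $\tilde\lambda\in(0,1]$, $\mathcal{L}\ge 0$, $x\ge 0$, $y\le 0$, $z\ge 0$, $r>0$. For $\Delta>y$ let $p^D(\Delta)=\frac{x}{\Delta-y}$. Suppose the set $F$ of $\Delta>y$ with $\beta(\mathcal{L}+\Delta)\le\tilde\lambda\big(z+\Delta p^D(\Delta)\big)$ is nonempty, and write $F=[\Delta_{\min},\Delta_{\max}]\cap(y,\infty)$, where $\Delta_{\min}\le\Delta_{\max}$ are the real roots of $-\beta \Delta^2 + \Delta( \tilde \lambda (z+x) - \beta(\mathcal{L} - y)) - \tilde\lambda zy + \beta\mathcal{L} y$. Consider the problem $$\max_{\Delta\in F}\; r\Big(z+\Delta\frac{x}{\Delta-y}\Big)-\mathcal{L}-\Delta ,$$ equivalently maximizing $f(\Delta)=r\Delta\frac{x}{\Delta-y}-\Delta$ over $F$. Let $\Delta^*=y+\sqrt{-yrx}$. Then the solution of this problem is $\Delta^*$ if $\Delta^*\in F$; it is $\Delta_{\min}$ if $\Delta^*<\Delta_{\min}$; and it is $\Delta_{\max}$ if $\Delta^*>\Delta_{\max}$.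
   Context: Single period $t$ of a stablecoin market model. A speculator owes $\mathcal{L}=\mathcal{L}_{t-1}$ stablecoins and holds Ether worth $z$ dollars; $x\ge0$ is new dollar stablecoin demand and $y\le0$ (with $|y|$ the free stablecoin supply). The speculator chooses a change $\Delta$ in stablecoin supply; for $\Delta>y$ the market clears at price $p^D(\Delta)=x/(\Delta-y)$. The speculator maximizes expected equity $r(z+\Delta p^D(\Delta))-(\mathcal{L}+\Delta)$, where $r$ is its expected multiplicative Ether return, subject to the leverage constraint $\beta(\mathcal{L}+\Delta)\le\tilde\lambda(z+\Delta p^D(\Delta))$ with liquidation threshold $\beta$ and leverage bound $\tilde\lambda$. *)

From Stdlib Require Import Reals Lra.
Open Scope R_scope.

(* market-clearing price p^D(Delta) = x / (Delta - y), meaningful for Delta > y *)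
Definition pD (x y Delta : R) : R := x / (Delta - y).

Definition feasible (beta lam L x y z Delta : R) : Prop :=
  y < Delta /\ beta * (L + Delta) <= lam * (z + Delta * pD x y Delta).

Definition objective (r L x y z Delta : R) : R :=
  r * (z + Delta * pD x y Delta) - L - Delta.

Definition quad (beta lam L x y z Delta : R) : R :=
  - beta * Delta ^ 2 + Delta * (lam * (z + x) - beta * (L - y))
  - lam * z * y + beta * L * y.

Definition is_solution (beta lam L x y z r Delta : R) : Prop :=
  feasible beta lam L x y z Delta /\
  forall D, feasible beta lam L x y z D ->
    objective r L x y z D <= objective r L x y z Delta.

Definition is_unique_solution (beta lam L x y z r Delta : R) : Prop :=
  is_solution beta lam L x y z r Delta /\
  forall D, is_solution beta lam L x y z r D -> D = Delta.

(* Multiplying the leverage constraint by [Delta - y > 0] turns it into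
   [quad Delta >= 0], so the feasible set is [(y, oo) ∩ [Dmin, Dmax]].  With
   [u = Delta - y] and [k = - y r x >= 0] the objective equals a constant minus
   [k / u + u], which strictly decreases on [(0, sqrt k]] and strictly increases
   on [[sqrt k, oo)].  Hence the unique maximiser is the point of the feasible
   interval closest to [Delta* = y + sqrt k]. *)
From Stdlib Require Import Reals Lra.
Open Scope R_scope.

Lemma quadratic_factor (a b c m M : R) :
  a <> 0 ->
  (forall D, a * D ^ 2 + b * D + c = 0 <-> (D = m \/ D = M)) ->
  forall D, a * D ^ 2 + b * D + c = a * (D - m) * (D - M).
Proof.
  intros ha hroots.
  (* Vieta: the second root is [- b / a - m]. *)
  set (p := - b / a - m).
  assert (hm : a * m ^ 2 + b * m + c = 0) by (apply hroots; auto).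
  assert (hfac : forall D, a * D ^ 2 + b * D + c = a * (D - m) * (D - p)).
  { intro D. transitivity (a * D ^ 2 + b * D + c - (a * m ^ 2 + b * m + c)).
    - lra.
    - unfold p. field. exact ha. }
  assert (hpM : p = M).
  { assert (hp : p = m \/ p = M) by (apply hroots; rewrite hfac; ring).
    destruct hp as [hpm | hpM]; [| exact hpM].
    assert (hM : a * M ^ 2 + b * M + c = 0) by (apply hroots; auto).
    rewrite hfac, hpm in hM.
    assert (hsq : (M - m) * (M - m) = 0).
    { apply (Rmult_eq_reg_l a); [lra | exact ha]. }
    apply Rmult_integral in hsq. lra. }
  intro D. rewrite hfac, hpM. reflexivity.
Qed.

Lemma between_iff_factor_nonpos (m M D : R) :
  m <= M -> (m <= D <= M <-> (D - m) * (D - M) <= 0).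
Proof.
  intro hmM. split.
  - intros [hm hM]. nra.
  - intro hprod. split.
    + destruct (Rle_or_lt m D) as [hm | hm]; [exact hm |].
      assert (0 < (m - D) * (M - D)) by (apply Rmult_lt_0_compat; lra). nra.
    + destruct (Rle_or_lt D M) as [hM | hM]; [exact hM |].
      assert (0 < (D - m) * (D - M)) by (apply Rmult_lt_0_compat; lra). nra.
Qed.

Lemma feasible_iff_quad_nonneg (beta lam L x y z D : R) :
  feasible beta lam L x y z D <-> y < D /\ 0 <= quad beta lam L x y z D.
Proof.
  unfold feasible.
  split; intros [hyD hcon]; split; try exact hyD.
  all: assert (E : quad beta lam L x y z D
                   = (lam * (z + D * pD x y D) - beta * (L + D)) * (D - y))
         by (unfold quad, pD; field; lra).
  all: rewrite E in *; nra.
Qed.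

Definition recip_sum (k u : R) : R := k / u + u.

Lemma recip_sum_lt (k u v : R) :
  0 < u -> 0 < v -> 0 < (v - u) * (u * v - k) -> recip_sum k u < recip_sum k v.
Proof.
  intros hu hv hprod.
  assert (E : recip_sum k v - recip_sum k u = (v - u) * (u * v - k) / (u * v)).
  { unfold recip_sum. field. lra. }
  assert (0 < (v - u) * (u * v - k) / (u * v)).
  { apply Rdiv_lt_0_compat; [exact hprod | nra]. }
  lra.
Qed.

Lemma recip_sum_increasing (k u v : R) :
  0 <= k -> 0 < u -> sqrt k <= u -> u < v -> recip_sum k u < recip_sum k v.
Proof.
  intros hk hu hsu huv.
  pose proof (sqrt_sqrt k hk). pose proof (sqrt_pos k).
  apply recip_sum_lt; [lra | lra |].
  apply Rmult_lt_0_compat; nra.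
Qed.

Lemma recip_sum_decreasing (k u v : R) :
  0 <= k -> 0 < v -> v < u -> u <= sqrt k -> recip_sum k u < recip_sum k v.
Proof.
  intros hk hv hvu hus.
  pose proof (sqrt_sqrt k hk).
  apply recip_sum_lt; [lra | lra |].
  replace ((v - u) * (u * v - k)) with ((u - v) * (k - u * v)) by ring.
  apply Rmult_lt_0_compat; nra.
Qed.

Lemma objective_eq (r L x y z D : R) :
  y < D ->
  objective r L x y z D = r * (z + x) - L - y - recip_sum (- y * r * x) (D - y).
Proof. intro hyD. unfold objective, pD, recip_sum. field. lra. Qed.

Lemma objective_lt_of_recip_sum_lt (r L x y z D D0 : R) :
  y < D -> y < D0 ->
  recip_sum (- y * r * x) (D0 - y) < recip_sum (- y * r * x) (D - y) ->
  objective r L x y z D < objective r L x y z D0.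
Proof. intros hyD hyD0 hlt. rewrite !objective_eq by assumption. lra. Qed.

Lemma is_unique_solution_of_strict_max (beta lam L x y z r D0 : R) :
  feasible beta lam L x y z D0 ->
  (forall D, feasible beta lam L x y z D -> D <> D0 ->
     objective r L x y z D < objective r L x y z D0) ->
  is_unique_solution beta lam L x y z r D0.
Proof.
  intros hD0 hstrict. split.
  - split; [exact hD0 |]. intros D hD.
    destruct (Req_dec D D0) as [-> | hne]; [lra |].
    left. exact (hstrict D hD hne).
  - intros D [hD hopt]. destruct (Req_dec D D0) as [-> | hne]; [reflexivity |].
    specialize (hopt D0 hD0). specialize (hstrict D hD hne). lra.
Qed.

Section FeasibleInterval.

Variables beta lam L x y z r Dmin Dmax : R.
Hypothesis hbeta : 0 < beta.
Hypothesis hroots :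
  forall D, quad beta lam L x y z D = 0 <-> (D = Dmin \/ D = Dmax).
Hypothesis hle : Dmin <= Dmax.

Let feas := feasible beta lam L x y z.
Let sol := is_unique_solution beta lam L x y z r.
Let k := - y * r * x.

Hypothesis hk : 0 <= k.

Lemma feasible_iff_between_roots (D : R) : feas D <-> y < D /\ Dmin <= D <= Dmax.
Proof.
  assert (hquad : forall D, quad beta lam L x y z D = - beta * (D - Dmin) * (D - Dmax)).
  { assert (hform : forall D, quad beta lam L x y z D
      = - beta * D ^ 2 + (lam * (z + x) - beta * (L - y)) * D + (- lam * z * y + beta * L * y))
      by (intro; unfold quad; ring).
    intro D'. rewrite hform. apply quadratic_factor; [lra |].
    intro D''. rewrite <- hform. apply hroots. }
  unfold feas. rewrite feasible_iff_quad_nonneg, hquad, between_iff_factor_nonpos by exact hle.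
  split; intros [hyD hD]; split; try exact hyD; nra.
Qed.

Lemma interior_solution : feas (y + sqrt k) -> sol (y + sqrt k).
Proof.
  intro hstar.
  assert (hs : 0 < sqrt k) by (apply feasible_iff_between_roots in hstar; lra).
  apply is_unique_solution_of_strict_max; [exact hstar |].
  intros D hD hne. apply feasible_iff_between_roots in hD as [hyD _].
  apply objective_lt_of_recip_sum_lt; [lra | lra | fold k].
  replace (y + sqrt k - y) with (sqrt k) by ring.
  destruct (Rtotal_order (D - y) (sqrt k)) as [hlt | [heq | hgt]].
  - apply recip_sum_decreasing; lra.
  - exfalso. apply hne. lra.
  - apply recip_sum_increasing; lra.
Qed.

Lemma left_endpoint_solution : y + sqrt k < Dmin -> sol Dmin.
Proof.
  intro hlt. pose proof (sqrt_pos k).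
  apply is_unique_solution_of_strict_max.
  - apply feasible_iff_between_roots. lra.
  - intros D hD hne. apply feasible_iff_between_roots in hD as [hyD hD].
    apply objective_lt_of_recip_sum_lt; [lra | lra | fold k].
    apply recip_sum_increasing; lra.
Qed.

Lemma right_endpoint_solution :
  (exists D, feas D) -> Dmax < y + sqrt k -> sol Dmax.
Proof.
  intros [D1 hD1] hlt. apply feasible_iff_between_roots in hD1.
  apply is_unique_solution_of_strict_max.
  - apply feasible_iff_between_roots. lra.
  - intros D hD hne. apply feasible_iff_between_roots in hD as [hyD hD].
    apply objective_lt_of_recip_sum_lt; [lra | lra | fold k].
    apply recip_sum_decreasing; lra.
Qed.

End FeasibleInterval.

Theorem proposition3p2 (beta lam L x y z r Dmin Dmax : R)
  (hbeta : 0 < beta) (hlam0 : 0 < lam) (hlam1 : lam <= 1)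
  (hL : 0 <= L) (hx : 0 <= x) (hy : y <= 0) (hz : 0 <= z) (hr : 0 < r)
  (hF : exists D, feasible beta lam L x y z D)
  (hroots : forall D, quad beta lam L x y z D = 0 <-> (D = Dmin \/ D = Dmax))
  (hle : Dmin <= Dmax) :
  let Dstar := y + sqrt (- y * r * x) in
  (feasible beta lam L x y z Dstar -> is_unique_solution beta lam L x y z r Dstar) /\
  (Dstar < Dmin -> is_unique_solution beta lam L x y z r Dmin) /\
  (Dmax < Dstar -> is_unique_solution beta lam L x y z r Dmax).
Proof.
  intro Dstar.
  assert (hk : 0 <= - y * r * x).
  { replace (- y * r * x) with ((- y) * (r * x)) by ring.
    apply Rmult_le_pos; [lra | nra]. }
  split; [| split].
  - exact (interior_solution _ _ _ _ _ _ _ _ _ hbeta hroots hle hk).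
  - exact (left_endpoint_solution _ _ _ _ _ _ _ _ _ hbeta hroots hle hk).
  - exact (right_endpoint_solution _ _ _ _ _ _ _ _ _ hbeta hroots hle hk hF).
Qed.
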